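(* For every positive integer $n$, $$\sum_{k=0}^{n-1}k(k+1)(8k+9)T_kT_{k+1}=\frac{(-1)^nn}{6}\sum_{k=0}^{n-1}\binom{n-1}{k}\binom{-n-1}{k}C_k3^{n-1-k}a(n,k),$$ where $$a(n,k)=4k^2n^2-8kn^3-14k^2n-14kn^2-4n^3+13k^2-11kn-26n^2+39k+4n+26.$$
   Context: $T_n=\sum_{k=0}^{\lfloor n/2\rfloor}\binom{n}{2k}\binom{2k}{k}$ is the central trinomial coefficient (constant term of $(1+x+x^{-1})^n$); $C_k=\binom{2k}{k}/(k+1)$; $\binom{x}{k}=x(x-1)\cdots(x-k+1)/k!$ for any integer $x$. *)

From mathcomp Require Import all_boot all_order all_algebra.
Set Implicit Arguments. Unset Strict Implicit. Unset Printing Implicit Defensive.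
Import Order.TTheory GRing.Theory Num.Theory.
Local Open Scope ring_scope.

(* Central trinomial coefficient T_n = sum_{k<=n/2} C(n,2k) C(2k,k). *)
Definition T (n : nat) : nat :=
  (\sum_(0 <= k < (n./2).+1) 'C(n, 2 * k) * 'C(2 * k, k))%N.

Definition catalan (k : nat) : rat := ('C(2 * k, k))%:R / (k.+1)%:R.

Definition binz (x : int) (k : nat) : rat :=
  (\prod_(i < k) (x - i%:Z)%:~R) / (k`!)%:R.

Definition a_coef (n k : nat) : rat :=
  let n := n%:R : rat in let k := k%:R : rat in
  4 * k ^+ 2 * n ^+ 2 - 8 * k * n ^+ 3 - 14 * k ^+ 2 * n - 14 * k * n ^+ 2
  - 4 * n ^+ 3 + 13 * k ^+ 2 - 11 * k * n - 26 * n ^+ 2 + 39 * k + 4 * n + 26.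

From mathcomp Require Import all_boot all_order all_algebra.
From mathcomp Require Import ring lra zify.
Import Order.TTheory GRing.Theory Num.Theory.
Local Open Scope ring_scope.

(** Both sides are quadratic forms in [T n] and [T n.+1] with rational-function
    coefficients.  On the left this is an induction on [n] using the recurrence
    [(n+2) T(n+2) = (2n+3) T(n+1) + 3(n+1) T n].  On the right, [binom(-n-1,k) =
    (-1)^k binom(n+k,k)] turns the summand into a multiple of
    [h(n,k) = (-3)^(n-k) binom(n,k) binom(n+k,k) binom(2k,k)], and creative
    telescoping expresses the sum through [X m = sum_k h(m,k)] for [m = n, n+1, n+2].
    Finally [X m = T m ^ 2], because both sides satisfy the same third-order
    recurrence (again by creative telescoping) with the same initial values.
    The telescoping certificates come from Zeilberger's algorithm. *)

Ltac natr_ge0 :=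
  repeat match goal with
  | n : nat |- _ =>
      lazymatch goal with
      | _ : is_true (0 <= n%:R) |- _ => fail
      | _ => have := ler0n rat n; move=> ?
      end
  end.

Ltac neq0_by_lra :=
  lazymatch goal with
  | |- is_true (_ && _) => apply/andP; split; neq0_by_lra
  | |- is_true (_ * _ != 0) => apply: mulf_neq0; neq0_by_lra
  | |- is_true (_ ^-1 != 0) => apply: invr_neq0; neq0_by_lra
  | |- is_true (_ ^+ _ != 0) => apply: expf_neq0; neq0_by_lra
  | |- _ => apply: lt0r_neq0; natr_ge0; lra
  end.

Ltac field_nat := field; neq0_by_lra.

Lemma mul_bin_central k : (k.+1 * 'C(k.+1.*2, k.+1) = 2 * (k.*2).+1 * 'C(k.*2, k))%N.
Proof.
apply/eqP; rewrite -(eqn_pmul2l (ltn0Sn k)); apply/eqP.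
rewrite doubleS -mul_bin_diag -mulnA (mul_bin_down (k.*2).+1 k).
have -> : ((k.*2).+1 - k = k.+1)%N by rewrite -addnn; lia.
by rewrite -mul2n; ring.
Qed.

Lemma binr_down {F : numFieldType} n j :
  'C(n, j)%:R = (n.+1%:R - j%:R) / n.+1%:R * 'C(n.+1, j)%:R :> F.
Proof.
have [le_jn1 | lt_n1j] := leqP j n.+1; last by rewrite !bin_small ?mulr0 // ltnW.
by rewrite mulrAC -natrB // -natrM -mul_bin_down natrM mulrAC mulfV ?mul1r ?pnatr_eq0.
Qed.

Lemma binr_up {F : numFieldType} n j :
  'C(n, j.+1)%:R = (n%:R - j%:R) / j.+1%:R * 'C(n, j)%:R :> F.
Proof.
have [le_jn | lt_nj] := leqP j n; last by rewrite !bin_small ?mulr0 // ltnW.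
by rewrite mulrAC -natrB // -natrM -mul_bin_left natrM mulrAC mulfV ?mul1r ?pnatr_eq0.
Qed.

Lemma binr_diag {F : numFieldType} n m :
  'C(n.+1, m.+1)%:R = n.+1%:R / m.+1%:R * 'C(n, m)%:R :> F.
Proof.
by rewrite mulrAC -natrM (mul_bin_diag n.+1) natrM mulrAC mulfV ?mul1r ?pnatr_eq0.
Qed.

Lemma binr_central {F : numFieldType} k :
  'C(k.+1.*2, k.+1)%:R = 2 * (k.*2).+1%:R / k.+1%:R * 'C(k.*2, k)%:R :> F.
Proof.
rewrite mulrAC -[2]/(2%:R) -!natrM -mul_bin_central natrM.
by rewrite mulrAC mulfV ?mul1r ?pnatr_eq0.
Qed.

Lemma telescope_sumr_eq0 {V : zmodType} (F G : nat -> V) N :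
  (forall k, F k = G k.+1 - G k) -> G 0%N = 0 -> G N = 0 ->
  \sum_(0 <= k < N) F k = 0.
Proof.
by move=> FG G0 GN; rewrite (telescope_sumr_eq G) ?G0 ?GN ?subrr // => k _.
Qed.

Lemma sumr_nat_widen0 {V : nmodType} (F : nat -> V) m n : (m <= n)%N ->
  (forall k, (m <= k)%N -> F k = 0) ->
  \sum_(0 <= k < n) F k = \sum_(0 <= k < m) F k.
Proof.
move=> le_mn F0; rewrite (@big_cat_nat _ _ _ m) //= [X in _ + X]big_nat_cond.
by rewrite [X in _ + X]big1 ?addr0 // => k /andP[/andP[/F0]].
Qed.

Definition T_term (n k : nat) : rat := ('C(n, k.*2) * 'C(k.*2, k))%:R.

Lemma T_term_down n k :
  T_term n k = (n%:R + 1 - 2 * k%:R) / (n%:R + 1) * T_term n.+1 k.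
Proof.
(* [field] does not interpret [.*2]. *)
by rewrite /T_term !natrM (binr_down n) -mul2n; field_nat.
Qed.

Lemma T_term_up n k :
  T_term n k.+1 = (n%:R - 2 * k%:R) * (n%:R - 2 * k%:R - 1) / (k%:R + 1) ^+ 2 * T_term n k.
Proof.
rewrite /T_term !natrM binr_central doubleS (binr_up n (k.*2).+1) (binr_up n k.*2).
by rewrite -!mul2n; field_nat.
Qed.

Lemma T_term_eq0 n k : (n < k.*2)%N -> T_term n k = 0.
Proof. by move=> lt_n2k; rewrite /T_term bin_small. Qed.

Lemma T_sum n N : (n < N)%N -> (T n)%:R = \sum_(0 <= k < N) T_term n k.
Proof.
move=> lt_nN; rewrite /T natr_sum [RHS](@sumr_nat_widen0 _ _ n./2.+1).
- by apply: eq_bigr => k _; rewrite mul2n.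
- by apply: leq_ltn_trans lt_nN; rewrite leq_half_double; lia.
- by move=> k; rewrite ltn_half_double; apply: T_term_eq0.
Qed.

Local Notation Tr n := ((T n)%:R : rat).

Lemma T_rec n :
  Tr n.+2 = ((2 * n%:R + 3) * Tr n.+1 + 3 * (n%:R + 1) * Tr n) / (n%:R + 2).
Proof.
have creative_telescoping : \sum_(0 <= k < n.+3) ((n%:R + 2) * T_term n.+2 k
    - (2 * n%:R + 3) * T_term n.+1 k - 3 * (n%:R + 1) * T_term n k) = 0.
  apply: (telescope_sumr_eq0 _ (fun k => - 4 * k%:R ^+ 2 / (n%:R + 2) * T_term n.+2 k)).
  - by move=> k; rewrite (T_term_down n) (T_term_down n.+1) T_term_up; field_nat.
  - by rewrite expr0n !mul0r.
  - by rewrite T_term_eq0 ?mulr0 //; lia.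
move/eqP: creative_telescoping; rewrite !sumrB -!mulr_sumr -!T_sum; [| lia..].
rewrite !subr_eq0 subr_eq => /eqP recurrence.
by rewrite [X in X / _]addrC -recurrence; field_nat.
Qed.

(* [(-1) ^+ (n + k) * 3 ^+ n / 3 ^+ k] is [(-3) ^ (n - k)] without truncated subtraction. *)
Definition sq_term (n k : nat) : rat :=
  (-1) ^+ (n + k) * 3 ^+ n / 3 ^+ k * ('C(n, k) * 'C(n + k, k) * 'C(k.*2, k))%:R.

Definition sq_sum (n : nat) : rat := \sum_(0 <= k < n.+1) sq_term n k.

Lemma sq_term_down n k :
  sq_term n k = (k%:R - n%:R - 1) / (3 * (n%:R + k%:R + 1)) * sq_term n.+1 k.
Proof.
rewrite /sq_term !natrM (binr_down n k) (binr_down (n + k) k) !addSn !exprS.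
by field_nat.
Qed.

Lemma sq_term_up n k :
  sq_term n k.+1 = - 2 * (n%:R - k%:R) * (n%:R + k%:R + 1) * (2 * k%:R + 1)
                   / (3 * (k%:R + 1) ^+ 3) * sq_term n k.
Proof.
rewrite /sq_term !natrM addnS (binr_up n k) (binr_diag (n + k) k) binr_central !exprS.
by rewrite -!mul2n; field_nat.
Qed.

Lemma sq_term_eq0 n k : (n < k)%N -> sq_term n k = 0.
Proof. by move=> lt_nk; rewrite /sq_term bin_small ?mul0n ?mulr0. Qed.

Lemma sq_sum_widen n N : (n < N)%N -> sq_sum n = \sum_(0 <= k < N) sq_term n k.
Proof. by move=> lt_nN; rewrite [RHS](@sumr_nat_widen0 _ _ n.+1) // => k /sq_term_eq0. Qed.

Definition rec_c0 (n : nat) : rat := 27 * (n%:R + 1) ^+ 2 * (2 * n%:R + 5).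
Definition rec_c1 (n : nat) : rat :=
  - (243 + 414 * n%:R + 231 * n%:R ^+ 2 + 42 * n%:R ^+ 3).
Definition rec_c2 (n : nat) : rat :=
  - (135 + 194 * n%:R + 91 * n%:R ^+ 2 + 14 * n%:R ^+ 3).
Definition rec_c3 (n : nat) : rat := (n%:R + 3) ^+ 2 * (2 * n%:R + 3).

Lemma sq_sum_rec n :
  rec_c0 n * sq_sum n + rec_c1 n * sq_sum n.+1 + rec_c2 n * sq_sum n.+2
  + rec_c3 n * sq_sum n.+3 = 0.
Proof.
have creative_telescoping : \sum_(0 <= k < n.+4)
    (rec_c0 n * sq_term n k + rec_c1 n * sq_term n.+1 k + rec_c2 n * sq_term n.+2 k
     + rec_c3 n * sq_term n.+3 k) = 0.
  apply: (telescope_sumr_eq0 _ (fun k =>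
    - 4 * k%:R ^+ 3 * (n%:R + 2) * (2 * n%:R + 3) * (2 * n%:R + 5)
    / ((n%:R + k%:R + 1) * (n%:R + k%:R + 2) * (n%:R + k%:R + 3)) * sq_term n.+3 k)).
  - move=> k; rewrite (sq_term_down n) (sq_term_down n.+1) (sq_term_down n.+2) sq_term_up.
    by rewrite /rec_c0 /rec_c1 /rec_c2 /rec_c3; field_nat.
  - by rewrite expr0n !(mulr0, mul0r).
  - by rewrite sq_term_eq0 ?mulr0.
rewrite !(sq_sum_widen _ n.+4); [| lia..].
by rewrite 4!mulr_sumr; rewrite 3!big_split in creative_telescoping.
Qed.

Lemma eq_rec3 {R : idomainType} (c0 c1 c2 c3 u v : nat -> R) :
  (forall n, c3 n != 0) ->
  (forall n, c0 n * u n + c1 n * u n.+1 + c2 n * u n.+2 + c3 n * u n.+3 = 0) ->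
  (forall n, c0 n * v n + c1 n * v n.+1 + c2 n * v n.+2 + c3 n * v n.+3 = 0) ->
  u 0%N = v 0%N -> u 1%N = v 1%N -> u 2%N = v 2%N -> u =1 v.
Proof.
move=> c3_neq0 rec_u rec_v uv0 uv1 uv2.
suff uv3 n : [/\ u n = v n, u n.+1 = v n.+1 & u n.+2 = v n.+2] by move=> n; case: (uv3 n).
elim: n => [|n [uvn uvn1 uvn2]]; first by [].
split=> //; apply: (mulfI (c3_neq0 n)).
apply: (addrI (c0 n * v n + c1 n * v n.+1 + c2 n * v n.+2)).
by rewrite rec_v -uvn -uvn1 -uvn2 rec_u.
Qed.

Lemma Tsq_rec n :
  rec_c0 n * Tr n ^+ 2 + rec_c1 n * Tr n.+1 ^+ 2 + rec_c2 n * Tr n.+2 ^+ 2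
  + rec_c3 n * Tr n.+3 ^+ 2 = 0.
Proof. by rewrite (T_rec n.+1) (T_rec n) /rec_c0 /rec_c1 /rec_c2 /rec_c3; field_nat. Qed.

Lemma sq_sumE n : sq_sum n = Tr n ^+ 2.
Proof.
move: n; apply: (@eq_rec3 _ rec_c0 rec_c1 rec_c2 rec_c3 _ (fun m => Tr m ^+ 2)).
- by move=> n; rewrite /rec_c3; neq0_by_lra.
- exact: sq_sum_rec.
- exact: Tsq_rec.
all: by rewrite /sq_sum /T unlock.
Qed.

Lemma prod_natz_ffact {R : pzRingType} (m k : nat) :
  \prod_(i < k) ((m%:Z - i%:Z)%:~R : R) = (m ^_ k)%:R.
Proof.
elim: k => [|k IHk]; first by rewrite big_ord0.
rewrite big_ord_recr /= IHk ffactnSr.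
have [le_km | lt_mk] := leqP k m; last by rewrite ffact_small // !mul0r.
by rewrite natrM natrB // intrB -!pmulrn.
Qed.

Lemma prod_negz_ffact {R : comPzRingType} (n k : nat) :
  \prod_(i < k) ((- n%:Z - 1 - i%:Z)%:~R : R) = (-1) ^+ k * ((n + k) ^_ k)%:R.
Proof.
elim: k => [|k IHk]; first by rewrite big_ord0 expr0 mulr1.
rewrite big_ord_recr /= IHk addnS ffactSS natrM exprS !intrD !intrN -!pmulrn.
rewrite -addn1 natrD; ring.
Qed.

Lemma binz_nat m k : binz m%:Z k = 'C(m, k)%:R.
Proof.
by rewrite /binz prod_natz_ffact -bin_ffact natrM mulfK // pnatr_eq0 -lt0n fact_gt0.
Qed.

Lemma binz_neg n k : binz (- n%:Z - 1) k = (-1) ^+ k * 'C(n + k, k)%:R.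
Proof.
rewrite /binz prod_negz_ffact -bin_ffact natrM mulrA mulfK //.
by rewrite pnatr_eq0 -lt0n fact_gt0.
Qed.

Definition lhsA (x : rat) : rat := -3/8 + 3/4 * x + 9/8 * x ^+ 2 - 3/2 * x ^+ 3 - 3/2 * x ^+ 4.
Definition lhsB (x : rat) : rat := 3/4 - 1/2 * x - 5/4 * x ^+ 2 + x ^+ 3 + x ^+ 4.
Definition lhsC (x : rat) : rat := -3/8 - 1/4 * x + 11/24 * x ^+ 2 + 1/6 * x ^+ 3 - 1/6 * x ^+ 4.

Lemma lhs_sumE n :
  \sum_(0 <= k < n) ((k * k.+1 * (8 * k + 9) * T k * T k.+1)%N)%:R
  = lhsA n%:R * Tr n ^+ 2 + lhsB n%:R * Tr n * Tr n.+1 + lhsC n%:R * Tr n.+1 ^+ 2.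
Proof.
elim: n => [|n IHn].
  by rewrite big_geq // /T unlock /lhsA /lhsB /lhsC; field.
rewrite big_nat_recr //= IHn (T_rec n) !natrM natrD !natrM /lhsA /lhsB /lhsC.
by move: (Tr n) (Tr n.+1) {IHn} => t0 t1; field_nat.
Qed.

(* Chosen so that, once [sq_sum = Tr ^+ 2] and [Tr n.+2] is eliminated by [T_rec],
   the combination below becomes the quadratic form of [lhs_sumE]. *)
Definition rhsA (x : rat) : rat := lhsA x - 3 * (x + 1) / (2 * (2 * x + 3)) * lhsB x.
Definition rhsB (x : rat) : rat := lhsC x - (2 * x + 3) / (6 * (x + 1)) * lhsB x.
Definition rhsC (x : rat) : rat := lhsB x * (x + 2) ^+ 2 / (6 * (x + 1) * (2 * x + 3)).

Definition rhs_term (n k : nat) : rat :=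
  (n%:R - k%:R) * sq_term n k * a_coef n k / (18 * (k%:R + 1)).

Lemma rhs_term_eq0 n k : (n <= k)%N -> rhs_term n k = 0.
Proof.
rewrite leq_eqVlt => /orP[/eqP <-|lt_nk]; first by rewrite /rhs_term subrr !mul0r.
by rewrite /rhs_term sq_term_eq0 // !(mulr0, mul0r).
Qed.

Lemma rhs_sum n :
  \sum_(0 <= k < n.+3) rhs_term n k
  = rhsA n%:R * sq_sum n + rhsB n%:R * sq_sum n.+1 + rhsC n%:R * sq_sum n.+2.
Proof.
have creative_telescoping : \sum_(0 <= k < n.+3) (rhs_term n k - rhsC n%:R * sq_term n.+2 k
    - rhsB n%:R * sq_term n.+1 k - rhsA n%:R * sq_term n k) = 0.
  apply: (telescope_sumr_eq0 _ (fun k =>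
    let x := n%:R in let y := k%:R in
    y ^+ 2 / 108 * (2 + 78 * y - 26 * y ^+ 2 - 13 * x - 68 * x * y + 28 * x * y ^+ 2
      - 15 * x ^+ 2 - 8 * x ^+ 2 * y - 8 * x ^+ 2 * y ^+ 2 + 4 * x ^+ 3 + 40 * x ^+ 3 * y
      + 4 * x ^+ 4) / ((x + y + 1) * (x + y + 2)) * sq_term n.+2 k)).
  - move=> k; rewrite /rhs_term (sq_term_down n) (sq_term_down n.+1) sq_term_up.
    by rewrite /rhsA /rhsB /rhsC /lhsA /lhsB /lhsC /a_coef; field_nat.
  - by rewrite /= expr0n !mul0r.
  - by rewrite /= sq_term_eq0 ?mulr0.
rewrite !(sq_sum_widen _ n.+3); [| lia..].
by move/eqP: creative_telescoping; rewrite 3!sumrB -3!mulr_sumr !subr_eq0 !subr_eq => /eqP.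
Qed.

Lemma rhs_summandE m k : (k <= m)%N ->
  (-1) ^+ m.+1 * m.+1%:R / 6%:R * (binz m%:Z k * binz (- (m.+1%:Z) - 1) k
    * catalan k * 3%:R ^+ (m - k) * a_coef m.+1 k) = rhs_term m.+1 k.
Proof.
move=> le_km; rewrite binz_nat binz_neg /catalan /rhs_term /sq_term (binr_down m k) !natrM.
have -> : 3 ^+ m.+1 = 3 * 3 ^+ (m - k) * 3 ^+ k :> rat by rewrite exprS -mulrA -exprD subnK.
rewrite exprD -mul2n.
by move: (a_coef m.+1 k) => a; field_nat.
Qed.

Theorem lemma3p2 (n : nat) (hn : (0 < n)%N) :
  \sum_(0 <= k < n)
     ((k * k.+1 * (8 * k + 9) * T k * T k.+1)%N)%:R
  = (-1) ^+ n * n%:R / 6%:R *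
    \sum_(0 <= k < n)
      binz (n.-1)%:Z k * binz (- (n%:Z) - 1) k * catalan k
      * 3%:R ^+ (n.-1 - k) * a_coef n k :> rat.
Proof.
case: n hn => [//|m] _; rewrite lhs_sumE mulr_sumr.
rewrite (@eq_big_nat _ _ _ 0 m.+1 _ (rhs_term m.+1)); last first.
  by move=> k /andP[_]; rewrite ltnS => /rhs_summandE.
have -> : \sum_(0 <= k < m.+1) rhs_term m.+1 k = \sum_(0 <= k < m.+4) rhs_term m.+1 k.
  by apply/esym/sumr_nat_widen0 => [|k]; [lia | exact: rhs_term_eq0].
rewrite rhs_sum !sq_sumE (T_rec m.+1) /rhsA /rhsB /rhsC.
move: (Tr m.+1) (Tr m.+2) (lhsA m.+1%:R) (lhsB m.+1%:R) (lhsC m.+1%:R) => t1 t2 a b c.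
by field_nat.
Qed.
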